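(* Let $(\mathbf F,\prec)$ be an IS-family over a finite set $V$. For every integer $x\ge0$, $|\mathbf{Pr}_x|\le 2^{x+1}|sm(\mathbf F)|$.
   Context: Let $V$ be a finite set, $n=|V|$, $\mathbf F$ a family of subsets of $V$ and $\prec$ a strict partial order on $\mathbf F$; $S\preceq S'$ means $S\prec S'$ or $S=S'$. For $S\in\mathbf F$ and $v\in V$, $S$ covers $v$ if there is $S'\in\mathbf F$ with $S'\prec S$ and $v\in S'\setminus S$. $Pred(S)$ is the set of $S'\in\mathbf F$ with $S'\prec S$ such that there is no $S''\in\mathbf F$ with $S'\prec S''\prec S$. The visible set $Vis(S)$ is the set of $v\in V$ such that $v\in S'$ for some $S'\in Pred(S)$ and $v$ is not covered by any element of $Pred(S)$. For $S\in\mathbf F$ and $v\in S$, a witness of $v$ w.r.t. $S$ is a $\prec$-minimal element $S'\in\mathbf F$ with $S\prec S'$ and $v\in S\setminus S'$. $(\mathbf F,\prec)$ is an IS-family if: (SE) there is a unique element $sm(\mathbf F)\in\mathbf F$ with $sm(\mathbf F)\prec S$ for every other $S\in\mathbf F$; (SM) $S_1\prec S_2$ implies $|S_1|<|S_2|$; (SW) for every $S\in\mathbf F$ and $v\in S$ there is at most one witness of $v$ w.r.t. $S$; (TE) if $S_1\prec S_2\prec S_3$ are in $\mathbf F$ and $v\in S_1\setminus S_2$ then $v\in S_1\setminus S_3$; (LVS) for every $S\in\mathbf F$ and $S'\in Pred(S)$, $|S'|\le |Vis(S)|$; (DVS) for every $S\in\mathbf F$ with $S\ne sm(\mathbf F)$,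 $Vis(S)$ is not a subset of $S$; (EC) $sm(\mathbf F)$ can be computed in $O(n^3)$ time, for given $S\in\mathbf F$ and $v\in S$ the witness of $v$ w.r.t. $S$ can be computed (or its nonexistence reported) in $O(n^3)$ time, and $S_1\prec S_2$ can be tested in $O(|S_1|)$ time. Notation: $hat(S)=S\setminus\bigcup_{S'\prec S}S'$; $ex(S)=|S|-|sm(\mathbf F)|$; $S\in\mathbf F$ is principal if $hat(S)\ne\emptyset$; $\mathbf{Pr}_x$ is the family of all principal sets $S\in\mathbf F$ with $ex(S)\le x$. *)

From mathcomp Require Import all_boot.
Set Implicit Arguments. Unset Strict Implicit. Unset Printing Implicit Defensive.

Section ISFamily.
Variable V : finType.
Variable F : {set {set V}}.
Variable prec : rel {set V}.

Definition strict_po_on : Prop :=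
  (forall S, S \in F -> ~~ prec S S) /\
  (forall S1 S2 S3, S1 \in F -> S2 \in F -> S3 \in F ->
     prec S1 S2 -> prec S2 S3 -> prec S1 S3).

Definition covers (S : {set V}) (v : V) : bool :=
  [exists S' in F, prec S' S && (v \in S' :\: S)].

Definition Pred (S : {set V}) : {set {set V}} :=
  [set S' in F | prec S' S && ~~ [exists S'' in F, prec S' S'' && prec S'' S]].

Definition Vis (S : {set V}) : {set V} :=
  [set v | [exists S' in Pred S, v \in S'] &&
           ~~ [exists S' in Pred S, covers S' v]].

Definition witness (S : {set V}) (v : V) (W : {set V}) : bool :=
  [&& W \in F, prec S W, v \in S :\: W &
      ~~ [exists W' in F, [&& prec W' W, prec S W' & v \in S :\: W']]].

Definition is_sm (s : {set V}) : Prop :=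
  s \in F /\ forall S, S \in F -> S != s -> prec s S.

(* IS-family axioms (SE), (SM), (SW), (TE), (LVS), (DVS), with s = sm(F) *)
Definition IS_family (s : {set V}) : Prop :=
  strict_po_on /\ (
      (is_sm s /\ (forall s', is_sm s' -> s' = s)) /\
      (forall S1 S2, S1 \in F -> S2 \in F -> prec S1 S2 -> #|S1| < #|S2|) /\
      (forall S v W1 W2, S \in F -> v \in S ->
                  witness S v W1 -> witness S v W2 -> W1 = W2) /\
      (forall S1 S2 S3 v, S1 \in F -> S2 \in F -> S3 \in F ->
                  prec S1 S2 -> prec S2 S3 -> v \in S1 :\: S2 -> v \in S1 :\: S3) /\
      (forall S S', S \in F -> S' \in Pred S -> #|S'| <= #|Vis S|) /\
      (forall S, S \in F -> S != s -> ~~ (Vis S \subset S))).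

Definition hat (S : {set V}) : {set V} :=
  S :\: \bigcup_(S' in F | prec S' S) S'.

Definition ex (s S : {set V}) : nat := #|S| - #|s|.

Definition Pr (s : {set V}) (x : nat) : {set {set V}} :=
  [set S in F | (hat S != set0) && (ex s S <= x)].

End ISFamily.

From mathcomp Require Import all_boot zify.
Set Implicit Arguments. Unset Strict Implicit. Unset Printing Implicit Defensive.

(* Give each set S the potential 2^(x+1-ex(S)) - 1.  By (DVS) every S in Pr_x
   other than sm(F) sees some w outside S; such a w lies in hat(b(S, w)) for a
   set b(S, w) below S, and by (TE) and (SW) S is the witness of w with respect
   to b(S, w), so (S, w) |-> (b(S, w), w) is injective.  With (LVS) one gets
   1 + |hat(S)| pot(S) <= sum of pot(b(S, w)) over these w; summing over S and
   collecting the right-hand sides along the injection, each set of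
   Pr_x \ {sm(F)} gains 1 and the total is paid for by the potential
   |sm(F)| (2^(x+1) - 1) of sm(F). *)

Section Charging.
Variables (V : finType) (F : {set {set V}}) (prec : rel {set V}).
Hypothesis prec_trans : forall S1 S2 S3, S1 \in F -> S2 \in F -> S3 \in F ->
  prec S1 S2 -> prec S2 S3 -> prec S1 S3.
Hypothesis card_prec : forall S1 S2, S1 \in F -> S2 \in F -> prec S1 S2 ->
  #|S1| < #|S2|.

Lemma PredP S P : P \in Pred F prec S -> P \in F /\ prec P S.
Proof. by rewrite inE => /andP [-> /andP [-> _]]. Qed.

Lemma Pred_above S Q : Q \in F -> S \in F -> prec Q S ->
  exists2 P, P \in Pred F prec S & (P == Q) || prec Q P.
Proof.
move=> + SF; elim: {Q}_.+1 {-2}Q (ltnSn (#|S| - #|Q|)) => // k IH Q ltk QF QS.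
have [QP|] := boolP (Q \in Pred F prec S); first by exists Q; rewrite ?eqxx.
rewrite inE QF QS /= negbK => /existsP [R /and3P [RF QR RS]].
have [|P PP /predU1P [PR|RP]] := IH R _ RF RS.
- by have := card_prec QF RF QR; have := card_prec RF SF RS; lia.
- by exists P; rewrite // PR QR orbT.
- by exists P; rewrite // (prec_trans QF RF (proj1 (PredP PP)) QR RP) orbT.
Qed.

Lemma hat_below w Q : Q \in F -> w \in Q ->
  exists2 B, B \in F & ((B == Q) || prec B Q) && (w \in hat F prec B).
Proof.
elim: {Q}_.+1 {-2}Q (ltnSn #|Q|) => // k IH Q ltk QF wQ.
have [wh|] := boolP (w \in hat F prec Q); first by exists Q; rewrite ?eqxx.
rewrite inE wQ andbT negbK => /bigcupP [R /andP [RF RQ] wR].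
have [|B BF /andP [/predU1P [BR|BR] wB]] := IH R _ RF wR.
- by have := card_prec RF QF RQ; lia.
- by exists B; rewrite // wB BR RQ orbT.
- by exists B; rewrite // wB (prec_trans BF RF QF BR RQ) orbT.
Qed.

Hypothesis TE : forall S1 S2 S3 v, S1 \in F -> S2 \in F -> S3 \in F ->
  prec S1 S2 -> prec S2 S3 -> v \in S1 :\: S2 -> v \in S1 :\: S3.
Hypothesis LVS : forall S P, S \in F -> P \in Pred F prec S ->
  #|P| <= #|Vis F prec S|.

Lemma Vis_notin_hat S w : w \in Vis F prec S -> w \notin hat F prec S.
Proof.
rewrite inE => /andP [/existsP [P /andP [PP wP]] _].
have [PF PS] := PredP PP.
rewrite inE negb_and negbK; apply/orP; left.
by apply/bigcupP; exists P; rewrite ?PF.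
Qed.

Lemma card_hat_Vis S P : S \in F -> P \in Pred F prec S ->
  #|hat F prec S| <= #|S| - #|P| + #|Vis F prec S :\: S|.
Proof.
move=> SF PP; have := LVS SF PP.
have hat_sub : hat F prec S \subset S :\: Vis F prec S.
  apply/subsetP => w wh; rewrite inE (subsetP (subsetDl _ _) _ wh) andbT.
  by apply: contraTN wh; apply: Vis_notin_hat.
have := subset_leq_card hat_sub.
have := cardsID S (Vis F prec S); have := cardsID (Vis F prec S) S.
rewrite setIC; lia.
Qed.

Lemma Vis_witness S B w : S \in F -> B \in F -> prec B S -> w \in B ->
  w \in Vis F prec S -> w \notin S -> witness F prec B w S.
Proof.
move=> SF BF BS wB wV wS; rewrite /witness SF BS inE wB wS /=.
apply/existsP => -[W /andP [WF /and3P [WS BW wBW]]].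
have [P PP BPw] : exists2 P, P \in Pred F prec S & prec B P && (w \in B :\: P).
  have [P PP /predU1P [PW|WP]] := Pred_above WF SF WS; exists P => //.
    by rewrite PW BW wBW.
  have [PF _] := PredP PP.
  by rewrite (prec_trans BF WF PF BW WP) (TE BF WF PF BW WP wBW).
move: wV; rewrite inE => /andP [_ /existsP []]; exists P; rewrite PP /=.
by apply/existsP; exists B; rewrite BF.
Qed.

(* The default [S] is never returned when [w] is visible from [S] (see [birthP]). *)
Definition birth S w : {set V} :=
  odflt S [pick B in F | prec B S && (w \in hat F prec B)].

Lemma birthP S w : S \in F -> w \in Vis F prec S ->
  [/\ birth S w \in F, prec (birth S w) S & w \in hat F prec (birth S w)].
Proof.
move=> SF; rewrite inE => /andP [/existsP [P /andP [PP wP]] _].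
have [PF PS] := PredP PP.
have [B BF /andP [BP wB]] := hat_below PF wP.
have BS : prec B S.
  by case/predU1P: BP => [->//|BP]; exact: prec_trans BF PF SF BP PS.
rewrite /birth; case: pickP => [B' /and3P [] // | noB].
by move: (noB B); rewrite BF BS wB.
Qed.

Hypothesis SW : forall S v W1 W2, S \in F -> v \in S ->
  witness F prec S v W1 -> witness F prec S v W2 -> W1 = W2.

Lemma birth_inj S1 S2 w : S1 \in F -> S2 \in F ->
  w \in Vis F prec S1 :\: S1 -> w \in Vis F prec S2 :\: S2 ->
  birth S1 w = birth S2 w -> S1 = S2.
Proof.
move=> S1F S2F; rewrite !in_setD => /andP [wS1 wV1] /andP [wS2 wV2] eqB.
have [BF BS1 wB] := birthP S1F wV1; have [_ BS2 _] := birthP S2F wV2.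
rewrite -eqB in BS2; have {}wB : w \in birth S1 w by move: wB; rewrite inE => /andP [].
exact: SW BF wB (Vis_witness S1F BF BS1 wB wV1 wS1) (Vis_witness S2F BF BS2 wB wV2 wS2).
Qed.

Variables (s : {set V}) (x : nat).
Hypothesis card_sm : forall T, T \in F -> #|s| <= #|T|.

Definition potential (S : {set V}) := 2 ^ (x.+1 - ex s S) - 1.

Lemma leq_potential (S T : {set V}) : #|S| <= #|T| -> potential T <= potential S.
Proof.
by move=> ST; apply/leq_sub2r/leq_pexp2l/leq_sub2l/leq_sub2r.
Qed.

Lemma potential_charge S : S \in F -> Vis F prec S :\: S != set0 -> ex s S <= x ->
  1 + #|hat F prec S| * potential S <=
  \sum_(w in Vis F prec S :\: S) potential (birth S w).
Proof.
move=> SF /set0Pn [w0 w0D] exS; set D := Vis F prec S :\: S in w0D *.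
(* Taking w with the largest birth set B makes pot(B) a lower bound for every
   term of the sum, and |B| <= |P| for some P in Pred(S) brings in (LVS). *)
have [w wD wmax] := @arg_maxnP _ w0 (mem D) (fun w => #|birth S w|) w0D.
have [BF BS _] := birthP SF (subsetP (subsetDl _ _) _ wD).
set B := birth S w in BF BS wmax.
have [P PP BP] := Pred_above BF SF BS; have [PF _] := PredP PP.
have BleP : #|B| <= #|P|.
  by case/predU1P: BP => [->//|]; move/(card_prec BF PF)/ltnW.
have hat_le := card_hat_Vis SF PP; rewrite -/D in hat_le.
have BltS := card_prec BF SF BS.
have sB := card_sm BF.
have D_gt0 : 0 < #|D| by apply/card_gt0P; exists w0.
set t := #|S| - #|B|; set q := 2 ^ (x.+1 - ex s S).
have potB : potential B = q * 2 ^ t - 1.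
  by rewrite -expnD /potential /ex; congr (2 ^ _ - 1); rewrite /ex in exS; lia.
apply: (@leq_trans (#|D| * potential B)).
  have t_lt := ltn_expl t (ltnSn 1); have q_gt0 : 0 < q by rewrite expn_gt0.
  rewrite potB /potential -/q.
  have : #|hat F prec S| * (q - 1) <= (t + #|D|) * (q - 1).
    by apply: leq_mul => //; rewrite /t; lia.
  have : t.+1 * q <= 2 ^ t * q by apply: leq_mul.
  nia.
rewrite -sum_nat_const; apply: leq_sum => v vD.
exact: leq_potential (wmax v vD).
Qed.

Lemma sum_birth_le (f : {set V} -> nat) (A : {set {set V}}) :
  A \subset Pr F prec s x ->
  \sum_(S in A) \sum_(w in Vis F prec S :\: S) f (birth S w) <=
  \sum_(B in Pr F prec s x) #|hat F prec B| * f B.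
Proof.
move=> APr; have AF S : S \in A -> S \in F.
  by move=> SA; move: (subsetP APr S SA); rewrite inE => /andP [].
rewrite pair_big_dep.
under [X in _ <= X]eq_bigr => B _ do rewrite -sum_nat_const.
rewrite [X in _ <= X]pair_big_dep.
pose pairs := [pred p : {set V} * V |
  (p.1 \in A) && (p.2 \in Vis F prec p.1 :\: p.1)].
rewrite (eq_bigl [in pairs]) //.
pose born (p : {set V} * V) := (birth p.1 p.2, p.2).
have born_inj : {in pairs &, injective born}.
  move=> [S1 w1] [S2 w2] /andP [/= /AF S1F w1D] /andP [/= /AF S2F w2D] [eqB ew].
  by subst w2; rewrite (birth_inj S1F S2F w1D w2D eqB).
have -> : \sum_(p in pairs) f (birth p.1 p.2) = \sum_(q in born @: pairs) f q.1.
  by rewrite big_imset.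
apply: (@sub_le_big nat addn leq leqnn (fun m n => leq_addr n m)).
move=> _ /imsetP [[S w] /andP [/= SA wD] ->] /=.
have SF := AF S SA; have [BF BS wB] := birthP SF (subsetP (subsetDl _ _) _ wD).
move: (subsetP APr S SA); rewrite in_set => /and3P [_ _ exS].
rewrite wB andbT in_set BF /=; apply/andP; split; first by apply/set0Pn; exists w.
by apply: leq_trans exS; apply/leq_sub2r/ltnW/card_prec.
Qed.

Hypothesis DVS : forall S, S \in F -> S != s -> ~~ (Vis F prec S \subset S).

Lemma card_Pr_setD1 : #|Pr F prec s x :\ s| <= #|s| * (2 ^ x.+1 - 1).
Proof.
set A := Pr F prec s x :\ s; pose charge B := #|hat F prec B| * potential B.
have pot_s : potential s = 2 ^ x.+1 - 1 by rewrite /potential /ex subnn subn0.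
have charged : \sum_(S in A) (1 + charge S) <= \sum_(B in Pr F prec s x) charge B.
  apply: leq_trans (sum_birth_le potential (subD1set _ _)).
  apply: leq_sum => S; rewrite !inE => /andP [Ss /and3P [SF _ exS]].
  by apply: potential_charge; rewrite // setD_eq0 DVS.
have split_s : \sum_(B in Pr F prec s x) charge B <=
    #|s| * potential s + \sum_(S in A) charge S.
  have [sPr|sPr] := boolP (s \in Pr F prec s x).
    by rewrite (big_setD1 s sPr) leq_add2r leq_mul // subset_leq_card // subsetDl.
  have -> : A = Pr F prec s x.
    by apply/setP => B; rewrite in_setD1; case: eqVneq => // ->; rewrite (negbTE sPr).
  exact: leq_addl.
by move: (leq_trans charged split_s); rewrite big_split sum1_card pot_s leq_add2r.
Qed.

Lemma card_Pr : #|Pr F prec s x| <= 2 ^ x.+1 * #|s|.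
Proof.
have sPr_le : (s \in Pr F prec s x) <= #|s|.
  case: (boolP (s \in _)) => //; rewrite inE => /and3P [_ /set0Pn [w ws] _].
  by apply/card_gt0P; exists w; move: ws; rewrite inE => /andP [].
rewrite (cardsD1 s); apply: leq_trans (leq_add sPr_le card_Pr_setD1) _.
by rewrite mulnBr muln1 subnKC ?leq_pmulr ?expn_gt0 // mulnC.
Qed.

End Charging.

Theorem proposition5 (V : finType) (F : {set {set V}}) (prec : rel {set V})
  (s : {set V}) :
  IS_family F prec s ->
  forall x : nat, #|Pr F prec s x| <= 2 ^ (x + 1) * #|s|.
Proof.
move=> [[_ prec_trans] [[[sF sm_prec] _] [card_prec [SW [TE [LVS DVS]]]]]] x.
have card_sm T : T \in F -> #|s| <= #|T|.
  move=> TF; have [-> //|Ts] := eqVneq T s.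
  exact/ltnW/card_prec/sm_prec.
by rewrite addn1; apply: card_Pr.
Qed.
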